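(* Let $R(x,t)>0$, $V_x(x,r,t)$, $V_r(x,r,t)$ be smooth on $\{0\le r\le R(x,t)\}$, and assume the incompressibility condition $\frac{\partial (rV_r)}{\partial r}+r\frac{\partial V_x}{\partial x}=0$ and the streamline boundary condition $\frac{\partial R}{\partial t}+V_x|_{r=R}\frac{\partial R}{\partial x}=V_r|_{r=R}$. Let $D>0$, let $C(x,t)$ be smooth, define $\eta$, $\tilde\eta=\eta-\langle\eta\rangle$ and $\tilde V_x = V_x-\langle V_x\rangle$ as in the context. Suppose $G_2=G_2(x,t)$ (independent of $r$) and a smooth function $W_2(x,r,t)$ with $r\,\partial W_2/\partial r\to 0$ as $r\to0$ and $\frac{\partial W_2}{\partial r}(x,R(x,t),t)=0$ satisfy $$\mathcal{L}W_2 = \frac{\partial}{\partial t}\Big(\frac{\partial C}{\partial x}\tilde\eta\Big) + G_2 - \tilde\eta\,\frac{\partial}{\partial x}\Big(\frac{\partial C}{\partial x}\langle V_x\rangle\Big) + V_x\frac{\partial}{\partial x}\Big(\frac{\partial C}{\partial x}\tilde\eta\Big) + V_r\,\frac{\partial C}{\partial x}\,\frac{\partial\tilde\eta}{\partial r}.$$ Then necessarily $$G_2 = -\frac{1}{R^2}\frac{\partial}{\partial x}\Big(\frac{\partial C}{\partial x}\,\big\langle R^2\,\eta\,\tilde V_x\big\rangle\Big).$$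
   Context: Cylindrical coordinates $(x,r,\theta)$ with axial symmetry, vessel radius $R(x,t)$; $\mathcal{L}f = D\left(\frac{\partial^2 f}{\partial r^2}+\frac1r\frac{\partial f}{\partial r}\right)$. Radial average: $\langle f\rangle(x,t)=\frac{2}{R^2}\int_0^{R} f(x,r,t)\,r\,dr$. $\eta(x,r,t)=\frac{1}{D}\int_0^r\frac{1}{z}\int_0^z\big(V_x(x,s,t)-\langle V_x\rangle(x,t)\big)s\,ds\,dz$. (The right-hand side of the equation for $W_2$ is what one obtains from the second equation of the center manifold hierarchy with $W_0=C$, $W_1=\frac{\partial C}{\partial x}\tilde\eta$, $G_1=-\langle V_x\rangle\frac{\partial C}{\partial x}$.) *)

From Stdlib Require Import Reals ClassicalEpsilon.
Open Scope R_scope.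

(* Functions of (x, r, t) and of (x, t). *)
Definition F3 := R -> R -> R -> R.
Definition F2 := R -> R -> R.

(* The derivative of a one-variable function at y (the genuine derivative
   whenever it exists; an unspecified value otherwise). *)
Definition pderiv (g : R -> R) (y : R) : R :=
  epsilon (inhabits 0) (fun l => derivable_pt_lim g y l).

Definition dx3 (f : F3) : F3 := fun x r t => pderiv (fun y => f y r t) x.
Definition dr3 (f : F3) : F3 := fun x r t => pderiv (fun y => f x y t) r.
Definition dt3 (f : F3) : F3 := fun x r t => pderiv (fun y => f x r y) t.
Definition dx2 (f : F2) : F2 := fun x t => pderiv (fun y => f y t) x.
Definition dt2 (f : F2) : F2 := fun x t => pderiv (fun y => f x y) t.

(* Riemann integral of f over [a,b] (the genuine value whenever f is
   Riemann integrable on [a,b]; unspecified otherwise). *)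
Definition Rint (f : R -> R) (a b : R) : R :=
  epsilon (inhabits 0)
    (fun v => exists pr : Riemann_integrable f a b, RiemannInt pr = v).

Definition cont3_at (f : F3) (x r t : R) : Prop :=
  forall eps, 0 < eps -> exists delta, 0 < delta /\
    forall x' r' t', Rabs (x' - x) < delta -> Rabs (r' - r) < delta ->
      Rabs (t' - t) < delta -> Rabs (f x' r' t' - f x r t) < eps.

Definition cont2_at (f : F2) (x t : R) : Prop :=
  forall eps, 0 < eps -> exists delta, 0 < delta /\
    forall x' t', Rabs (x' - x) < delta -> Rabs (t' - t) < delta ->
      Rabs (f x' t' - f x t) < eps.

(* C^infinity on an (open) set U of R^3: there is a family of functions
   containing f, closed under the three partial derivatives, all of whose
   members are jointly continuous and have all partial derivatives at every
   point of U. *)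
Definition smooth3_on (U : R -> R -> R -> Prop) (f : F3) : Prop :=
  exists S : F3 -> Prop, S f /\
    forall g, S g ->
      S (dx3 g) /\ S (dr3 g) /\ S (dt3 g) /\
      forall x r t, U x r t ->
        cont3_at g x r t /\
        (exists l, derivable_pt_lim (fun y => g y r t) x l) /\
        (exists l, derivable_pt_lim (fun y => g x y t) r l) /\
        (exists l, derivable_pt_lim (fun y => g x r y) t l).

Definition smooth3 (f : F3) : Prop := smooth3_on (fun _ _ _ => True) f.

Definition smooth2 (f : F2) : Prop :=
  exists S : F2 -> Prop, S f /\
    forall g, S g ->
      S (dx2 g) /\ S (dt2 g) /\
      forall x t,
        cont2_at g x t /\
        (exists l, derivable_pt_lim (fun y => g y t) x l) /\
        (exists l, derivable_pt_lim (fun y => g x y) t l).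

Definition avg (Rad : F2) (f : F3) : F2 :=
  fun x t => 2 / (Rad x t) ^ 2 * Rint (fun r => f x r t * r) 0 (Rad x t).

Definition eta (D : R) (Rad : F2) (Vx : F3) : F3 :=
  fun x r t =>
    / D * Rint (fun z => / z *
                  Rint (fun s => (Vx x s t - avg Rad Vx x t) * s) 0 z) 0 r.

Definition eta_tilde (D : R) (Rad : F2) (Vx : F3) : F3 :=
  fun x r t => eta D Rad Vx x r t - avg Rad (eta D Rad Vx) x t.

Definition V_tilde (Rad : F2) (Vx : F3) : F3 :=
  fun x r t => Vx x r t - avg Rad Vx x t.

Definition Lop (D : R) (f : F3) : F3 :=
  fun x r t => D * (dr3 (dr3 f) x r t + / r * dr3 f x r t).

(* Multiply the equation for [W2] by [r] and integrate over [0, R].  The left side is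
   [D [r dW2/dr]_0^R = 0] by the two boundary conditions on [W2].  On the right,
   [<eta_tilde> = 0] kills the term in [d/dx (C_x <V_x>)]; since [int_0^R r W1 dr = 0]
   identically (with [W1 = C_x eta_tilde]), the Leibniz rule turns [int r dW1/dt] and
   [<V_x> int r dW1/dx] into boundary terms at [r = R]; integrating [r V_r dW1/dr] by parts
   and using incompressibility produces [- int r (dV_x/dx) W1], which cancels against the
   same term from [int r V_tilde dW1/dx]; and the streamline condition makes all boundary
   terms cancel.  What remains is [G2 R^2/2 + d/dx int_0^R r V_tilde W1 dr = 0], and
   [int_0^R r V_tilde W1 dr = C_x <R^2 eta V_tilde> / 2] because [<V_tilde> = 0].
   Most of the work is the regularity needed for differentiating under the integral sign:
   every function involved is shown jointly continuous with continuous [x]- and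
   [t]-derivatives, including at the removable singularity [r = 0] of the kernel of [eta]. *)

From Coquelicot Require Import Coquelicot.
From Stdlib Require Import Reals Lra ClassicalEpsilon Classical FunctionalExtensionality.
Open Scope R_scope.

Lemma pderiv_eq g y l : derivable_pt_lim g y l -> pderiv g y = l.
Proof.
  intros H. unfold pderiv.
  pose proof (epsilon_spec (inhabits 0) (fun l => derivable_pt_lim g y l) (ex_intro _ l H)) as H'.
  exact (uniqueness_limite _ _ _ _ H' H).
Qed.

Lemma dx3_eq f x r t l : derivable_pt_lim (fun y => f y r t) x l -> dx3 f x r t = l.
Proof. apply pderiv_eq. Qed.
Lemma dr3_eq f x r t l : derivable_pt_lim (fun y => f x y t) r l -> dr3 f x r t = l.
Proof. apply pderiv_eq. Qed.
Lemma dt3_eq f x r t l : derivable_pt_lim (fun y => f x r y) t l -> dt3 f x r t = l.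
Proof. apply pderiv_eq. Qed.

Lemma Rint_RInt f a b : ex_RInt f a b -> Rint f a b = RInt f a b.
Proof.
  intros H. unfold Rint.
  assert (E : exists v, exists pr : Riemann_integrable f a b, RiemannInt pr = v).
  { exists (RiemannInt (ex_RInt_Reals_0 _ _ _ H)). eauto. }
  destruct (epsilon_spec (inhabits 0) _ E) as [pr Hpr].
  rewrite <- Hpr. symmetry. apply RInt_Reals.
Qed.

Lemma F3_ext (f g : F3) : (forall x r t, f x r t = g x r t) -> f = g.
Proof.
  intros H. apply functional_extensionality; intro x.
  apply functional_extensionality; intro r. apply functional_extensionality; intro t. auto.
Qed.

Lemma dx2_ext (f g : F2) : (forall x t, f x t = g x t) -> dx2 f = dx2 g.
Proof.
  intros H. replace f with g; [reflexivity|].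
  apply functional_extensionality; intro x. apply functional_extensionality; auto.
Qed.

Lemma is_RInt_plus_R (f g : R -> R) a b (If Ig : R) :
  is_RInt f a b If -> is_RInt g a b Ig -> is_RInt (fun y => f y + g y) a b (If + Ig).
Proof. intros. apply (is_RInt_plus (V := R_NormedModule) f g); auto. Qed.

Lemma is_RInt_scal_R k (f : R -> R) a b (If : R) :
  is_RInt f a b If -> is_RInt (fun y => k * f y) a b (k * If).
Proof. intros. apply (is_RInt_scal (V := R_NormedModule) f); auto. Qed.

Lemma is_RInt_ext_R (f g : R -> R) a b (If : R) :
  (forall y, f y = g y) -> is_RInt f a b If -> is_RInt g a b If.
Proof. intros H H1. apply (is_RInt_ext f); auto. Qed.

Lemma RInt_correct_R (f : R -> R) a b : ex_RInt f a b -> is_RInt f a b (RInt f a b).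
Proof. intros. apply (RInt_correct (V := R_CompleteNormedModule)); auto. Qed.

Lemma ex_RInt_continuous_R (f : R -> R) a b :
  (forall z, continuous f z) -> ex_RInt f a b.
Proof. intros. apply (@ex_RInt_continuous R_CompleteNormedModule). auto. Qed.

Lemma RInt_id_0 b : RInt (fun r => r) 0 b = b ^ 2 / 2.
Proof.
  apply is_RInt_unique.
  replace (b ^ 2 / 2) with (minus ((fun r => r ^ 2 / 2) b) ((fun r => r ^ 2 / 2) 0))
    by (unfold minus, plus, opp; simpl; field).
  apply (is_RInt_derive (V := R_CompleteNormedModule) (fun r => r ^ 2 / 2) (fun r => r)).
  - intros. auto_derive; [auto | field].
  - intros. apply continuous_id.
Qed.

Lemma abs_RInt_le_length_const g a b M : ex_RInt g a b ->
  (forall z, Rmin a b <= z <= Rmax a b -> Rabs (g z) <= M) ->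
  Rabs (RInt g a b) <= Rabs (b - a) * M.
Proof.
  intros Hi Hb. destruct (Rle_dec a b) as [Hab|Hab].
  - rewrite (Rabs_right (b - a)) by lra. apply abs_RInt_le_const; auto.
    intros z Hz. apply Hb. rewrite Rmin_left, Rmax_right; lra.
  - rewrite <- (opp_RInt_swap (V := R_CompleteNormedModule)) by (apply ex_RInt_swap; auto).
    change (Rabs (- RInt g b a) <= Rabs (b - a) * M). rewrite Rabs_Ropp.
    rewrite (Rabs_left (b - a)) by lra. replace (- (b - a)) with (a - b) by ring.
    apply abs_RInt_le_const; [lra | apply ex_RInt_swap; auto |].
    intros z Hz. apply Hb. rewrite Rmin_right, Rmax_left; lra.
Qed.

(* [RInt rho e b] is continuous in [e] and tends to [0] as [e -> 0+]. *)
Lemma RInt_0_of_flux_vanishing (rho w : R -> R) (b k : R) : 0 < b ->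
  (forall z, continuous rho z) ->
  (forall eps, 0 < eps -> exists delta, 0 < delta /\
     forall r, 0 < r < delta -> Rabs (r * w r) < eps) ->
  (forall e, 0 < e < b -> RInt rho e b = - k * (e * w e)) ->
  RInt rho 0 b = 0.
Proof.
  intros Hb Hc Hw He.
  assert (HF : continuous (fun z => RInt rho z b) 0).
  { apply (continuous_RInt_2 rho 0 b). exists (mkposreal 1 Rlt_0_1). intros.
    apply RInt_correct_R, ex_RInt_continuous_R; auto. }
  apply NNPP; intro Hn. set (F0 := RInt rho 0 b) in *.
  assert (Hep : 0 < Rabs F0 / 2) by (apply Rabs_pos_lt in Hn; lra).
  apply (proj1 (filterlim_locally _ _)) with (eps := mkposreal _ Hep) in HF.
  destruct HF as [d1 Hd1]. pose proof (cond_pos d1) as d1p.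
  assert (Hq : 0 < (Rabs F0 / 2) / (Rabs k + 1)).
  { apply Rdiv_lt_0_compat; [lra|]. pose proof (Rabs_pos k). lra. }
  destruct (Hw _ Hq) as [d2 [d2p Hd2]].
  set (e := Rmin (Rmin d1 d2) b / 2).
  assert (Hm : 0 < Rmin (Rmin d1 d2) b) by (repeat apply Rmin_pos; auto).
  pose proof (Rmin_l (Rmin d1 d2) b). pose proof (Rmin_r (Rmin d1 d2) b).
  pose proof (Rmin_l d1 d2). pose proof (Rmin_r d1 d2).
  assert (A1 : Rabs (RInt rho e b - F0) < Rabs F0 / 2).
  { apply (Hd1 e). change (Rabs (e - 0) < d1). unfold e. rewrite Rminus_0_r, Rabs_right; lra. }
  assert (A2 : Rabs (e * w e) < (Rabs F0 / 2) / (Rabs k + 1)) by (apply Hd2; unfold e; lra).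
  rewrite He in A1 by (unfold e; lra).
  assert (A3 : Rabs (- k * (e * w e)) < Rabs F0 / 2).
  { rewrite Rabs_mult, Rabs_Ropp. pose proof (Rabs_pos k). pose proof (Rabs_pos (e * w e)).
    apply Rle_lt_trans with ((Rabs k + 1) * Rabs (e * w e)); [nra|].
    apply Rlt_le_trans with ((Rabs k + 1) * ((Rabs F0 / 2) / (Rabs k + 1))).
    - apply Rmult_lt_compat_l; lra.
    - right; field; lra. }
  pose proof (Rabs_triang_inv F0 (- k * (e * w e))).
  replace (- k * (e * w e) - F0) with (- (F0 - - k * (e * w e))) in A1 by ring.
  rewrite Rabs_Ropp in A1. lra.
Qed.

(** * Joint continuity *)

Definition uncurry3 (f : F3) : R * R * R -> R :=
  fun p => f (fst (fst p)) (snd (fst p)) (snd p).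

Lemma cont3_at_continuous f x r t : cont3_at f x r t <-> continuous (uncurry3 f) ((x, r), t).
Proof.
  split.
  - intros H. apply filterlim_locally. intros eps.
    destruct (H eps (cond_pos eps)) as [d [dpos Hd]].
    exists (mkposreal d dpos). intros [[x' r'] t'] [[Hx Hr] Ht]. apply Hd; assumption.
  - intros H eps Heps.
    apply (proj1 (filterlim_locally _ _)) with (eps := mkposreal eps Heps) in H.
    destruct H as [d Hd]. exists d. split; [apply cond_pos|].
    intros x' r' t' Hx Hr Ht. apply (Hd ((x', r'), t')). repeat split; assumption.
Qed.

Lemma cont3_at_mult f g x r t : cont3_at f x r t -> cont3_at g x r t ->
  cont3_at (fun x r t => f x r t * g x r t) x r t.
Proof.
  intros Hf Hg. apply cont3_at_continuous.
  apply (continuous_mult (uncurry3 f) (uncurry3 g)); apply cont3_at_continuous; auto.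
Qed.

Lemma cont3_at_plus f g x r t : cont3_at f x r t -> cont3_at g x r t ->
  cont3_at (fun x r t => f x r t + g x r t) x r t.
Proof.
  intros Hf Hg. apply cont3_at_continuous.
  apply (@continuous_plus _ _ R_NormedModule (uncurry3 f) (uncurry3 g));
    apply cont3_at_continuous; auto.
Qed.

Lemma cont3_at_inv_r x r t : r <> 0 -> cont3_at (fun _ r _ => / r) x r t.
Proof.
  intros Hr. apply cont3_at_continuous.
  apply (continuous_comp (fun p : R * R * R => snd (fst p)) Rinv).
  - apply (continuous_comp (fun p : R * R * R => fst p) snd);
      [apply continuous_fst | apply continuous_snd].
  - apply continuous_Rinv. exact Hr.
Qed.

Lemma cont3_at_continuous_r f x r t : cont3_at f x r t -> continuous (fun z => f x z t) r.
Proof.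
  intros H. apply filterlim_locally. intros eps.
  destruct (H eps (cond_pos eps)) as [d [dp Hd]]. exists (mkposreal d dp). intros y Hy.
  apply Hd; [rewrite Rminus_diag, Rabs_R0; auto | exact Hy | rewrite Rminus_diag, Rabs_R0; auto].
Qed.

Definition continuous3 (f : F3) := forall x r t, cont3_at f x r t.

Definition lift2 (g : F2) : F3 := fun x _ t => g x t.

Lemma continuous3_mult f g : continuous3 f -> continuous3 g ->
  continuous3 (fun x r t => f x r t * g x r t).
Proof. intros Hf Hg x r t. apply cont3_at_mult; auto. Qed.

Lemma continuous3_plus f g : continuous3 f -> continuous3 g ->
  continuous3 (fun x r t => f x r t + g x r t).
Proof. intros Hf Hg x r t. apply cont3_at_plus; auto. Qed.

Lemma continuous3_opp f : continuous3 f -> continuous3 (fun x r t => - f x r t).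
Proof.
  intros Hf x r t. apply cont3_at_continuous.
  apply (@continuous_opp _ _ R_NormedModule (uncurry3 f)). apply cont3_at_continuous; auto.
Qed.

Lemma continuous3_const c : continuous3 (fun _ _ _ => c).
Proof.
  intros x r t eps He. exists 1. split; [lra|]. intros. rewrite Rminus_diag, Rabs_R0. auto.
Qed.

Lemma continuous3_r : continuous3 (fun _ r _ => r).
Proof. intros x r t eps He. exists eps. auto. Qed.

Lemma continuous3_inv f : continuous3 f -> (forall x r t, f x r t <> 0) ->
  continuous3 (fun x r t => / f x r t).
Proof.
  intros Hf Hn x r t. apply cont3_at_continuous.
  apply (continuous_comp (uncurry3 f) Rinv).
  - apply cont3_at_continuous; auto.
  - apply continuous_Rinv. apply Hn.
Qed.

Lemma continuous3_lift2 g : (forall x t, cont2_at g x t) -> continuous3 (lift2 g).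
Proof.
  intros Hg x r t eps He. destruct (Hg x t eps He) as [d [dp Hd]].
  exists d. split; auto. intros. apply Hd; auto.
Qed.

Lemma continuous3_at_boundary f b : continuous3 f -> continuous3 (lift2 b) ->
  continuous3 (fun x _ t => f x (b x t) t).
Proof.
  intros Hf Hb x r t eps He.
  destruct (Hf x (b x t) t eps He) as [d [dp Hd]].
  destruct (Hb x r t d dp) as [d2 [dp2 Hd2]].
  exists (Rmin d d2). split; [apply Rmin_pos; auto|].
  pose proof (Rmin_l d d2). pose proof (Rmin_r d d2).
  intros x' r' t' Hx Hr Ht. apply Hd; [lra | apply (Hd2 x' r' t'); lra | lra].
Qed.

Lemma continuity_2d_xr f t : continuous3 f ->
  forall u v, continuity_2d_pt (fun u v => f u v t) u v.
Proof.
  intros Hf u v eps. destruct (Hf u v t eps (cond_pos eps)) as [d [dp Hd]].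
  exists (mkposreal d dp). intros a b Ha Hb. apply Hd; auto.
  rewrite Rminus_diag, Rabs_R0; auto.
Qed.

Lemma continuity_2d_tr f x : continuous3 f ->
  forall u v, continuity_2d_pt (fun u v => f x v u) u v.
Proof.
  intros Hf u v eps. destruct (Hf x v u eps (cond_pos eps)) as [d [dp Hd]].
  exists (mkposreal d dp). intros a b Ha Hb. apply Hd; auto.
  rewrite Rminus_diag, Rabs_R0; auto.
Qed.

Lemma continuous3_continuous_r f x t z : continuous3 f -> continuous (fun r => f x r t) z.
Proof. intros Hf. apply cont3_at_continuous_r, Hf. Qed.

Lemma continuous3_ex_RInt_r f x t a b : continuous3 f -> ex_RInt (fun r => f x r t) a b.
Proof. intros Hf. apply ex_RInt_continuous_R. intros. apply continuous3_continuous_r; auto. Qed.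

Lemma continuous3_uniform_on_segment f x0 t0 lo hi : continuous3 f ->
  forall eps, 0 < eps -> exists d, 0 < d /\
    forall r, lo <= r <= hi -> forall x r' t, Rabs (x - x0) < d -> Rabs (r' - r) < d ->
      Rabs (t - t0) < d -> Rabs (f x r' t - f x0 r t0) < eps.
Proof.
  intros Hf eps He.
  assert (Hc : forall s, {d : R | 0 < d /\ forall x r' t, Rabs (x - x0) < d ->
      Rabs (r' - s) < d -> Rabs (t - t0) < d -> Rabs (f x r' t - f x0 s t0) < eps/2}).
  { intros s. apply constructive_indefinite_description. apply (Hf x0 s t0). lra. }
  assert (Hp : forall s, 0 < proj1_sig (Hc s) / 2).
  { intros s. pose proof (proj1 (proj2_sig (Hc s))). lra. }
  destruct (compactness_value_1d lo hi (fun s => mkposreal _ (Hp s))) as [d Hd].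
  exists d. split; [apply cond_pos|]. pose proof (cond_pos d).
  intros r Hr x r' t Hx Hr' Ht.
  apply NNPP. intros Hneg. apply (Hd r Hr). intros [s [Hs [Hrs Hds]]]. apply Hneg.
  simpl in Hrs, Hds.
  destruct (proj2_sig (Hc s)) as [dsp Hds']. set (ds := proj1_sig (Hc s)) in *.
  assert (A1 : Rabs (f x r' t - f x0 s t0) < eps/2).
  { apply Hds'; [lra | | lra].
    replace (r' - s) with ((r' - r) + (r - s)) by ring.
    eapply Rle_lt_trans; [apply Rabs_triang | lra]. }
  assert (A2 : Rabs (f x0 r t0 - f x0 s t0) < eps/2).
  { apply Hds'; [rewrite Rminus_diag, Rabs_R0; auto | lra | rewrite Rminus_diag, Rabs_R0; auto]. }
  replace (f x r' t - f x0 r t0) with ((f x r' t - f x0 s t0) - (f x0 r t0 - f x0 s t0)) by ring.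
  eapply Rle_lt_trans; [apply Rabs_triang|]. rewrite Rabs_Ropp. lra.
Qed.

Lemma continuous3_bounded_near_segment f x0 t0 lo hi : continuous3 f -> lo <= hi ->
  exists d M, 0 < d /\ 0 < M /\ forall x r t,
    Rabs (x - x0) < d -> lo <= r <= hi -> Rabs (t - t0) < d -> Rabs (f x r t) <= M.
Proof.
  intros Hf Hlh.
  destruct (continuous3_uniform_on_segment f x0 t0 lo hi Hf 1 Rlt_0_1) as [d [dp Hd]].
  destruct (continuity_ab_maj (fun r => Rabs (f x0 r t0)) lo hi Hlh) as [m [Hm _]].
  { intros c Hc. apply (continuity_pt_comp (fun r => f x0 r t0) Rabs).
    - apply continuity_pt_filterlim, continuous3_continuous_r; auto.
    - apply Rcontinuity_abs. }
  exists d, (Rabs (f x0 m t0) + 1). split; [auto|]. split; [pose proof (Rabs_pos (f x0 m t0)); lra|].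
  intros x r t Hx Hr Ht.
  specialize (Hd r Hr x r t Hx). rewrite Rminus_diag, Rabs_R0 in Hd. specialize (Hd dp Ht).
  specialize (Hm r Hr). simpl in Hm.
  pose proof (Rabs_triang_inv (f x r t) (f x0 r t0)). lra.
Qed.

Definition prim_r (f : F3) : F3 := fun x r t => RInt (fun z => f x z t) 0 r.

Lemma prim_r_sub f x r t x0 r0 t0 : continuous3 f ->
  prim_r f x r t - prim_r f x0 r0 t0
  = RInt (fun z => f x z t - f x0 z t0) 0 r0 + RInt (fun z => f x z t) r0 r.
Proof.
  intros Hf. unfold prim_r.
  rewrite (RInt_minus (V := R_CompleteNormedModule)) by (apply continuous3_ex_RInt_r; auto).
  rewrite <- (RInt_Chasles (V := R_CompleteNormedModule) _ 0 r0 r)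
    by (apply continuous3_ex_RInt_r; auto).
  change (@eq R (RInt (fun z => f x z t) 0 r0 + RInt (fun z => f x z t) r0 r
     - RInt (fun z => f x0 z t0) 0 r0)
    (RInt (fun z => f x z t) 0 r0 - RInt (fun z => f x0 z t0) 0 r0
     + RInt (fun z => f x z t) r0 r)). ring.
Qed.

Lemma continuous3_prim_r f : continuous3 f -> continuous3 (prim_r f).
Proof.
  intros Hf x0 r0 t0 eps He.
  set (lo := Rmin 0 r0 - 1). set (hi := Rmax 0 r0 + 1).
  pose proof (Rmin_l 0 r0). pose proof (Rmin_r 0 r0).
  pose proof (Rmax_l 0 r0). pose proof (Rmax_r 0 r0).
  destruct (continuous3_bounded_near_segment f x0 t0 lo hi Hf) as [d1 [M [d1p [Mp HM]]]].
  { unfold lo, hi. lra. }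
  assert (He1 : 0 < eps / (2 * (Rabs r0 + 1))).
  { apply Rdiv_lt_0_compat; [auto | pose proof (Rabs_pos r0); lra]. }
  destruct (continuous3_uniform_on_segment f x0 t0 lo hi Hf _ He1) as [d2 [d2p Hd2]].
  assert (He2 : 0 < eps / (2 * M)) by (apply Rdiv_lt_0_compat; lra).
  exists (Rmin (Rmin d1 d2) (Rmin 1 (eps / (2 * M)))).
  split; [repeat apply Rmin_pos; auto; lra|].
  pose proof (Rmin_l (Rmin d1 d2) (Rmin 1 (eps / (2 * M)))).
  pose proof (Rmin_r (Rmin d1 d2) (Rmin 1 (eps / (2 * M)))).
  pose proof (Rmin_l d1 d2). pose proof (Rmin_r d1 d2).
  pose proof (Rmin_l 1 (eps / (2 * M))). pose proof (Rmin_r 1 (eps / (2 * M))).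
  intros x r t Hx Hr Ht.
  assert (Bfar : Rabs (RInt (fun z => f x z t) r0 r) <= Rabs (r - r0) * M).
  { apply abs_RInt_le_length_const; [apply continuous3_ex_RInt_r; auto|].
    intros z Hz. apply HM; [lra | | lra].
    destruct (Rabs_def2 (r - r0) 1) as [? ?]; [lra|].
    assert (Rmin r0 r >= r0 - 1) by (unfold Rmin; destruct Rle_dec; lra).
    assert (Rmax r0 r <= r0 + 1) by (unfold Rmax; destruct Rle_dec; lra).
    unfold lo, hi. lra. }
  assert (Bnear : Rabs (RInt (fun z => f x z t - f x0 z t0) 0 r0)
      <= Rabs (r0 - 0) * (eps / (2 * (Rabs r0 + 1)))).
  { apply abs_RInt_le_length_const.
    - apply (ex_RInt_minus (V := R_NormedModule)); apply continuous3_ex_RInt_r; auto.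
    - intros z Hz. left. apply Hd2; [unfold lo, hi; lra | lra | rewrite Rminus_diag, Rabs_R0; auto | lra]. }
  rewrite prim_r_sub by auto. eapply Rle_lt_trans; [apply Rabs_triang|].
  assert (Rabs (r - r0) * M < eps / 2).
  { apply Rlt_le_trans with (eps / (2 * M) * M); [apply Rmult_lt_compat_r; lra|].
    right. field. lra. }
  assert (Rabs (r0 - 0) * (eps / (2 * (Rabs r0 + 1))) < eps / 2).
  { rewrite Rminus_0_r. pose proof (Rabs_pos r0).
    apply Rlt_le_trans with ((Rabs r0 + 1) * (eps / (2 * (Rabs r0 + 1))));
      [apply Rmult_lt_compat_r; lra | right; field; lra]. }
  lra.
Qed.

Definition radial_flux (f : F3) : F3 :=
  fun x z t => / z * prim_r (fun x s t => f x s t * s) x z t.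

(* At [z = 0] the division is junk ([/ 0 = 0]), which matches the limit [O(z)]. *)
Lemma cont3_at_radial_flux_axis f x0 t0 : continuous3 f -> cont3_at (radial_flux f) x0 0 t0.
Proof.
  intros Hf eps He.
  destruct (continuous3_bounded_near_segment f x0 t0 (-1) 1 Hf) as [d1 [M [d1p [Mp HM]]]];
    [lra|].
  assert (He2 : 0 < eps / M) by (apply Rdiv_lt_0_compat; lra).
  exists (Rmin d1 (Rmin 1 (eps / M))). split; [repeat apply Rmin_pos; lra|].
  pose proof (Rmin_l d1 (Rmin 1 (eps / M))). pose proof (Rmin_r d1 (Rmin 1 (eps / M))).
  pose proof (Rmin_l 1 (eps / M)). pose proof (Rmin_r 1 (eps / M)).
  intros x z t Hx Hz Ht. unfold radial_flux, prim_r. rewrite RInt_point.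
  change (zero : R) with 0. rewrite Rmult_0_r, Rminus_0_r. rewrite Rminus_0_r in Hz.
  destruct (Req_dec z 0) as [Hz0|Hz0].
  { subst z. rewrite RInt_point. change (zero : R) with 0. rewrite Rmult_0_r, Rabs_R0. auto. }
  rewrite Rabs_mult, Rabs_inv.
  assert (Hza : 0 < Rabs z) by (apply Rabs_pos_lt; auto).
  assert (B : Rabs (RInt (fun s => f x s t * s) 0 z) <= Rabs (z - 0) * (M * Rabs z)).
  { apply abs_RInt_le_length_const.
    - apply (continuous3_ex_RInt_r (fun x s t => f x s t * s)).
      apply continuous3_mult; [auto | apply continuous3_r].
    - intros s Hs. rewrite Rabs_mult.
      assert (Rabs s <= Rabs z).
      { unfold Rmin, Rmax in Hs. destruct (Rle_dec 0 z).
        - rewrite (Rabs_right z), Rabs_right; lra.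
        - rewrite (Rabs_left z), Rabs_left1; lra. }
      destruct (Rabs_def2 s 1) as [? ?]; [lra|].
      apply Rmult_le_compat; try apply Rabs_pos; auto. apply HM; lra. }
  rewrite Rminus_0_r in B.
  apply Rle_lt_trans with (/ Rabs z * (Rabs z * (M * Rabs z))).
  { apply Rmult_le_compat_l; [left; apply Rinv_0_lt_compat|]; auto. }
  replace (/ Rabs z * (Rabs z * (M * Rabs z))) with (M * Rabs z) by (field; lra).
  apply Rlt_le_trans with (M * (eps / M)); [apply Rmult_lt_compat_l; lra | right; field; lra].
Qed.

Lemma continuous3_radial_flux f : continuous3 f -> continuous3 (radial_flux f).
Proof.
  intros Hf x z t. destruct (Req_dec z 0) as [->|Hz].
  - apply cont3_at_radial_flux_axis; auto.
  - apply (cont3_at_mult (fun _ r _ => / r)); [apply cont3_at_inv_r; auto|].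
    apply continuous3_prim_r, continuous3_mult; [auto | apply continuous3_r].
Qed.

(** * Differentiation under the integral sign *)

Lemma continuity_2d_pt_continuous_y (phi : R -> R -> R) u v :
  continuity_2d_pt phi u v -> continuous (phi u) v.
Proof.
  intros H. apply filterlim_locally. intros eps.
  destruct (H eps) as [d Hd]. exists d. intros y Hy. apply Hd; [|exact Hy].
  rewrite Rminus_diag, Rabs_R0. apply cond_pos.
Qed.

Lemma is_derive_RInt_param_upper (phi dphi : R -> R -> R) (b : R -> R) :
  (forall u v, continuity_2d_pt phi u v) ->
  (forall u v, is_derive (fun y => phi y v) u (dphi u v)) ->
  (forall u v, continuity_2d_pt dphi u v) ->
  forall u db, is_derive b u db ->
  is_derive (fun y => RInt (phi y) 0 (b y)) u (RInt (dphi u) 0 (b u) + phi u (b u) * db).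
Proof.
  intros Hc Hd Hdc u db Hb.
  assert (HD : forall u v, Derive (fun y => phi y v) u = dphi u v).
  { intros. apply is_derive_unique, Hd. }
  assert (HDc : forall u v, continuity_2d_pt (fun u v => Derive (fun z => phi z v) u) u v).
  { intros. eapply continuity_2d_pt_ext; [|apply (Hdc u0 v)]. intros; simpl. rewrite HD; auto. }
  assert (Hcy : forall v, continuity_pt (phi u) v).
  { intros. apply continuity_pt_filterlim, continuity_2d_pt_continuous_y. auto. }
  replace (RInt (dphi u) 0 (b u) + phi u (b u) * db) with
     (RInt (fun t => Derive (fun u0 => phi u0 t) u) 0 (b u) + - phi u 0 * 0 + phi u (b u) * db)
    by (rewrite (RInt_ext _ (dphi u)); [ring | intros; rewrite HD; auto]).
  assert (HI : forall y a c, ex_RInt (phi y) a c).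
  { intros. apply ex_RInt_continuous_R. intros. apply continuity_2d_pt_continuous_y. auto. }
  set (one := mkposreal 1 Rlt_0_1).
  apply (is_derive_RInt_param_bound_comp phi (fun _ => 0) b u 0 db).
  - exists one. intros. auto.
  - exists one. exists one. intros. auto.
  - exists one. exists one. intros. auto.
  - apply is_derive_Reals, derivable_pt_lim_const.
  - exact Hb.
  - exists one. exists one. intros. eexists. apply Hd.
  - intros. apply HDc.
  - exists one. intros. apply HDc.
  - exists one. intros. apply HDc.
  - apply Hcy.
  - apply Hcy.
Qed.

Lemma is_derive_RInt_param (phi dphi : R -> R -> R) :
  (forall u v, continuity_2d_pt phi u v) ->
  (forall u v, is_derive (fun y => phi y v) u (dphi u v)) ->
  (forall u v, continuity_2d_pt dphi u v) ->
  forall u b, is_derive (fun y => RInt (phi y) 0 b) u (RInt (dphi u) 0 b).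
Proof.
  intros Hc Hd Hdc u b.
  replace (RInt (dphi u) 0 b) with (RInt (dphi u) 0 ((fun _ => b) u) + phi u b * 0) by ring.
  apply (is_derive_RInt_param_upper phi dphi (fun _ => b)); auto.
  apply is_derive_Reals, derivable_pt_lim_const.
Qed.

Record C1xt (f : F3) : Prop := {
  C1xt_cont : continuous3 f;
  C1xt_cont_dx : continuous3 (dx3 f);
  C1xt_cont_dt : continuous3 (dt3 f);
  C1xt_dx : forall x r t, derivable_pt_lim (fun y => f y r t) x (dx3 f x r t);
  C1xt_dt : forall x r t, derivable_pt_lim (fun y => f x r y) t (dt3 f x r t) }.

Lemma C1xt_intro f fx ft : continuous3 f -> continuous3 fx -> continuous3 ft ->
  (forall x r t, derivable_pt_lim (fun y => f y r t) x (fx x r t)) ->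
  (forall x r t, derivable_pt_lim (fun y => f x r y) t (ft x r t)) ->
  C1xt f.
Proof.
  intros Hc Hcx Hct Hx Ht.
  assert (Ex : dx3 f = fx) by (apply F3_ext; intros; apply dx3_eq, Hx).
  assert (Et : dt3 f = ft) by (apply F3_ext; intros; apply dt3_eq, Ht).
  split; rewrite ?Ex, ?Et; auto.
Qed.

Lemma dx3_mult f g : C1xt f -> C1xt g ->
  dx3 (fun x r t => f x r t * g x r t) = (fun x r t => dx3 f x r t * g x r t + f x r t * dx3 g x r t).
Proof.
  intros Hf Hg. apply F3_ext. intros. apply dx3_eq.
  apply (derivable_pt_lim_mult (fun y => f y r t) (fun y => g y r t)); [apply Hf | apply Hg].
Qed.

Lemma C1xt_mult f g : C1xt f -> C1xt g -> C1xt (fun x r t => f x r t * g x r t).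
Proof.
  intros [a1 a2 a3 a4 a5] [b1 b2 b3 b4 b5].
  apply (C1xt_intro _ (fun x r t => dx3 f x r t * g x r t + f x r t * dx3 g x r t)
                      (fun x r t => dt3 f x r t * g x r t + f x r t * dt3 g x r t));
    try (apply continuous3_plus); try (apply continuous3_mult); auto; intros.
  - apply (derivable_pt_lim_mult (fun y => f y r t) (fun y => g y r t)); auto.
  - apply (derivable_pt_lim_mult (fun y => f x r y) (fun y => g x r y)); auto.
Qed.

Lemma C1xt_plus f g : C1xt f -> C1xt g -> C1xt (fun x r t => f x r t + g x r t).
Proof.
  intros [a1 a2 a3 a4 a5] [b1 b2 b3 b4 b5].
  apply (C1xt_intro _ (fun x r t => dx3 f x r t + dx3 g x r t)
                      (fun x r t => dt3 f x r t + dt3 g x r t));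
    try (apply continuous3_plus); auto; intros.
  - apply (derivable_pt_lim_plus (fun y => f y r t) (fun y => g y r t)); auto.
  - apply (derivable_pt_lim_plus (fun y => f x r y) (fun y => g x r y)); auto.
Qed.

Lemma C1xt_const c : C1xt (fun _ _ _ => c).
Proof.
  apply (C1xt_intro _ (fun _ _ _ => 0) (fun _ _ _ => 0)); try apply continuous3_const;
    intros; apply derivable_pt_lim_const.
Qed.

Lemma C1xt_r : C1xt (fun _ r _ => r).
Proof.
  apply (C1xt_intro _ (fun _ _ _ => 0) (fun _ _ _ => 0));
    try apply continuous3_const; try apply continuous3_r;
    intros; apply (derivable_pt_lim_const r).
Qed.

Lemma C1xt_minus f g : C1xt f -> C1xt g -> C1xt (fun x r t => f x r t - g x r t).
Proof.
  intros Hf Hg.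
  replace (fun x r t => f x r t - g x r t) with (fun x r t => f x r t + (-1) * g x r t)
    by (apply F3_ext; intros; ring).
  apply C1xt_plus; [|apply (C1xt_mult (fun _ _ _ => -1))]; auto using C1xt_const.
Qed.

Lemma C1xt_inv f : C1xt f -> (forall x r t, f x r t <> 0) -> C1xt (fun x r t => / f x r t).
Proof.
  intros [a1 a2 a3 a4 a5] Hn.
  assert (Hsq : continuous3 (fun x r t => / f x r t ^ 2)).
  { apply continuous3_inv; [|intros; apply pow_nonzero; auto].
    replace (fun x r t => f x r t ^ 2) with (fun x r t => f x r t * f x r t)
      by (apply F3_ext; intros; ring).
    apply continuous3_mult; auto. }
  apply (C1xt_intro _ (fun x r t => - dx3 f x r t / f x r t ^ 2)
                      (fun x r t => - dt3 f x r t / f x r t ^ 2));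
    try (unfold Rdiv; apply continuous3_mult; auto; apply continuous3_opp; auto);
    [apply continuous3_inv; auto | |]; intros; apply is_derive_Reals.
  - apply (is_derive_inv (fun y => f y r t)); [apply is_derive_Reals|]; auto.
  - apply (is_derive_inv (fun y => f x r y)); [apply is_derive_Reals|]; auto.
Qed.

Lemma smooth2_C1xt g : smooth2 g -> C1xt (lift2 g) /\ C1xt (lift2 (dx2 g)).
Proof.
  intros [S [Hg HS]].
  assert (H : forall h, S h -> C1xt (lift2 h)).
  { intros h Sh. destruct (HS h Sh) as [Sx [St Hc]].
    apply (C1xt_intro _ (lift2 (dx2 h)) (lift2 (dt2 h)));
      try (apply continuous3_lift2; intros; apply HS; auto); intros x r t.
    - destruct (Hc x t) as [_ [[l Hl] _]]. unfold lift2, dx2. rewrite (pderiv_eq _ _ l Hl). auto.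
    - destruct (Hc x t) as [_ [_ [l Hl]]]. unfold lift2, dt2. rewrite (pderiv_eq _ _ l Hl). auto. }
  split; apply H; [|apply HS]; auto.
Qed.

Lemma smooth3_C1xt f : smooth3 f ->
  C1xt f /\ continuous3 (dr3 f) /\
  (forall x r t, derivable_pt_lim (fun y => f x y t) r (dr3 f x r t)).
Proof.
  intros [S [Sf HS]]. destruct (HS f Sf) as [Sx [Sr [St Hc]]].
  split; [|split].
  - apply (C1xt_intro _ (dx3 f) (dt3 f)); intros x r t.
    + apply (Hc x r t I).
    + apply (HS _ Sx); exact I.
    + apply (HS _ St); exact I.
    + destruct (Hc x r t I) as [_ [[l Hl] _]]. rewrite (dx3_eq f x r t l Hl). auto.
    + destruct (Hc x r t I) as [_ [_ [_ [l Hl]]]]. rewrite (dt3_eq f x r t l Hl). auto.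
  - intros x r t. apply (HS _ Sr). exact I.
  - intros x r t. destruct (Hc x r t I) as [_ [_ [[l Hl] _]]]. rewrite (dr3_eq f x r t l Hl). auto.
Qed.

Lemma derivable_pt_lim_dx3_prim_r f : C1xt f ->
  forall x r t, derivable_pt_lim (fun y => prim_r f y r t) x (prim_r (dx3 f) x r t).
Proof.
  intros [a1 a2 a3 a4 a5] x r t. apply is_derive_Reals.
  apply (is_derive_RInt_param (fun u v => f u v t) (fun u v => dx3 f u v t));
    try apply continuity_2d_xr; auto. intros. apply is_derive_Reals. auto.
Qed.

Lemma derivable_pt_lim_dt3_prim_r f : C1xt f ->
  forall x r t, derivable_pt_lim (fun y => prim_r f x r y) t (prim_r (dt3 f) x r t).
Proof.
  intros [a1 a2 a3 a4 a5] x r t. apply is_derive_Reals.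
  apply (is_derive_RInt_param (fun u v => f x v u) (fun u v => dt3 f x v u));
    try apply continuity_2d_tr; auto. intros. apply is_derive_Reals. auto.
Qed.

Lemma C1xt_prim_r f : C1xt f -> C1xt (prim_r f).
Proof.
  intros Hf. apply (C1xt_intro _ (prim_r (dx3 f)) (prim_r (dt3 f)));
    try apply continuous3_prim_r; try apply Hf.
  - apply derivable_pt_lim_dx3_prim_r; auto.
  - apply derivable_pt_lim_dt3_prim_r; auto.
Qed.

Lemma derivable_pt_lim_dr3_prim_r f x r t : continuous3 f ->
  derivable_pt_lim (fun y => prim_r f x y t) r (f x r t).
Proof.
  intros Hf. apply is_derive_Reals. unfold prim_r.
  apply (is_derive_RInt (V := R_NormedModule) (fun z => f x z t)
           (fun y => RInt (fun z => f x z t) 0 y) 0 r).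
  - exists (mkposreal 1 Rlt_0_1). intros. apply RInt_correct_R, continuous3_ex_RInt_r; auto.
  - apply continuous3_continuous_r; auto.
Qed.

Lemma C1xt_mult_r f : C1xt f -> C1xt (fun x r t => f x r t * r).
Proof. intros. apply C1xt_mult; auto using C1xt_r. Qed.

Lemma dx3_mult_r f : C1xt f -> dx3 (fun x r t => f x r t * r) = (fun x r t => dx3 f x r t * r).
Proof.
  intros Hf. apply F3_ext. intros. apply dx3_eq.
  replace (dx3 f x r t * r) with (dx3 f x r t * r + f x r t * 0) by ring.
  apply (derivable_pt_lim_mult (fun y => f y r t) (fun _ => r));
    [apply Hf | apply derivable_pt_lim_const].
Qed.

Lemma dt3_mult_r f : C1xt f -> dt3 (fun x r t => f x r t * r) = (fun x r t => dt3 f x r t * r).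
Proof.
  intros Hf. apply F3_ext. intros. apply dt3_eq.
  replace (dt3 f x r t * r) with (dt3 f x r t * r + f x r t * 0) by ring.
  apply (derivable_pt_lim_mult (fun y => f x r y) (fun _ => r));
    [apply Hf | apply derivable_pt_lim_const].
Qed.

Lemma C1xt_radial_flux f : C1xt f -> C1xt (radial_flux f).
Proof.
  intros Hf.
  apply (C1xt_intro _ (radial_flux (dx3 f)) (radial_flux (dt3 f)));
    try apply continuous3_radial_flux; try apply Hf; intros; unfold radial_flux.
  - rewrite <- (dx3_mult_r f Hf).
    apply derivable_pt_lim_scal with (f := fun y => prim_r (fun x s t => f x s t * s) y r t).
    apply derivable_pt_lim_dx3_prim_r, C1xt_mult_r, Hf.
  - rewrite <- (dt3_mult_r f Hf).
    apply derivable_pt_lim_scal with (f := fun y => prim_r (fun x s t => f x s t * s) x r y).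
    apply derivable_pt_lim_dt3_prim_r, C1xt_mult_r, Hf.
Qed.

Definition int_radius (b : F2) (g : F3) : F2 := fun x t => RInt (fun r => g x r t) 0 (b x t).

Section IntRadius.
Variable b : F2.
Hypothesis Hb : C1xt (lift2 b).

Lemma derivable_pt_lim_dx_int_radius g : C1xt g -> forall x t,
  derivable_pt_lim (fun y => int_radius b g y t) x
    (prim_r (dx3 g) x (b x t) t + g x (b x t) t * dx2 b x t).
Proof.
  intros [a1 a2 a3 a4 a5] x t. apply is_derive_Reals.
  apply (is_derive_RInt_param_upper (fun u v => g u v t) (fun u v => dx3 g u v t) (fun y => b y t));
    try apply continuity_2d_xr; auto.
  - intros. apply is_derive_Reals. auto.
  - apply is_derive_Reals. exact (C1xt_dx _ Hb x 0 t).
Qed.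

Lemma derivable_pt_lim_dt_int_radius g : C1xt g -> forall x t,
  derivable_pt_lim (fun y => int_radius b g x y) t
    (prim_r (dt3 g) x (b x t) t + g x (b x t) t * dt2 b x t).
Proof.
  intros [a1 a2 a3 a4 a5] x t. apply is_derive_Reals.
  apply (is_derive_RInt_param_upper (fun u v => g x v u) (fun u v => dt3 g x v u) (fun y => b x y));
    try apply continuity_2d_tr; auto.
  - intros. apply is_derive_Reals. auto.
  - apply is_derive_Reals. exact (C1xt_dt _ Hb x 0 t).
Qed.

Lemma C1xt_int_radius g : C1xt g -> C1xt (lift2 (int_radius b g)).
Proof.
  intros Hg. destruct Hb as [c1 c2 c3 _ _].
  assert (Hbd : forall h, continuous3 h -> continuous3 (fun x _ t => h x (b x t) t))
    by (intros; apply continuous3_at_boundary; auto).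
  apply (C1xt_intro _ (fun x _ t => prim_r (dx3 g) x (b x t) t + g x (b x t) t * dx2 b x t)
                      (fun x _ t => prim_r (dt3 g) x (b x t) t + g x (b x t) t * dt2 b x t));
    intros.
  - apply (Hbd (prim_r g)), continuous3_prim_r, Hg.
  - apply continuous3_plus; [apply (Hbd (prim_r (dx3 g))), continuous3_prim_r, Hg|].
    apply continuous3_mult; [apply Hbd, Hg | exact c2].
  - apply continuous3_plus; [apply (Hbd (prim_r (dt3 g))), continuous3_prim_r, Hg|].
    apply continuous3_mult; [apply Hbd, Hg | exact c3].
  - apply derivable_pt_lim_dx_int_radius; auto.
  - apply derivable_pt_lim_dt_int_radius; auto.
Qed.

End IntRadius.

Lemma avg_int_radius b f : continuous3 f -> forall x t,
  avg b f x t = 2 * / (b x t * b x t) * int_radius b (fun x r t => f x r t * r) x t.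
Proof.
  intros Hf x t. unfold avg, int_radius. rewrite Rint_RInt.
  - unfold Rdiv. replace (b x t ^ 2) with (b x t * b x t) by ring. reflexivity.
  - apply (continuous3_ex_RInt_r (fun x r t => f x r t * r)).
    apply continuous3_mult; auto using continuous3_r.
Qed.

Lemma C1xt_avg b f : C1xt (lift2 b) -> (forall x t, 0 < b x t) -> C1xt f -> C1xt (lift2 (avg b f)).
Proof.
  intros Hb Hpos Hf.
  replace (lift2 (avg b f)) with (fun x r t => 2 * / (lift2 b x r t * lift2 b x r t)
      * lift2 (int_radius b (fun x r t => f x r t * r)) x r t)
    by (apply F3_ext; intros; unfold lift2; rewrite avg_int_radius; auto; apply Hf).
  apply C1xt_mult; [apply (C1xt_mult (fun _ _ _ => 2)), C1xt_inv; try apply C1xt_mult|];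
    auto using C1xt_const, C1xt_int_radius, C1xt_mult_r.
  intros. unfold lift2. specialize (Hpos x t). apply Rmult_integral_contrapositive; split; lra.
Qed.

Lemma RInt_sub_avg_mult_r b f : (forall x t, 0 < b x t) -> continuous3 f -> forall x t,
  RInt (fun r => (f x r t - avg b f x t) * r) 0 (b x t) = 0.
Proof.
  intros Hpos Hf x t. rewrite avg_int_radius by auto. unfold int_radius.
  set (I := RInt (fun r => f x r t * r) 0 (b x t)).
  set (c := - (2 * / (b x t * b x t) * I)).
  assert (Hi : is_RInt (fun r => f x r t * r + c * r) 0 (b x t) (I + c * (b x t ^ 2 / 2))).
  { apply is_RInt_plus_R.
    - apply RInt_correct_R, (continuous3_ex_RInt_r (fun x r t => f x r t * r)).
      apply continuous3_mult; auto using continuous3_r.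
    - apply is_RInt_scal_R. rewrite <- RInt_id_0.
      apply RInt_correct_R, ex_RInt_continuous_R. intros; apply continuous_id. }
  replace (I + c * (b x t ^ 2 / 2)) with 0 in Hi by (unfold c; specialize (Hpos x t); field; lra).
  apply is_RInt_unique. eapply is_RInt_ext_R; [|exact Hi]. intros; unfold c; simpl; ring.
Qed.

(** * The dispersion problem *)

Section Dispersion.
Variables (Rad : F2) (Vx Vr : F3) (D : R) (C : F2) (G2 : F2) (W2 : F3).
Hypothesis HRpos : forall x t, 0 < Rad x t.
Hypothesis HRsm : smooth2 Rad.
Hypothesis HVxsm : smooth3 Vx.
Hypothesis HVrsm : smooth3 Vr.
Hypothesis Hincomp : forall x r t, 0 <= r <= Rad x t ->
  dr3 (fun x r t => r * Vr x r t) x r t + r * dx3 Vx x r t = 0.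
Hypothesis Hstream : forall x t,
  dt2 Rad x t + Vx x (Rad x t) t * dx2 Rad x t = Vr x (Rad x t) t.
Hypothesis HD : 0 < D.
Hypothesis HCsm : smooth2 C.
Hypothesis HW2sm : smooth3_on (fun _ r _ => 0 < r) W2.
Hypothesis HW2lim : forall x t eps, 0 < eps -> exists delta, 0 < delta /\
  forall r, 0 < r < delta -> Rabs (r * dr3 W2 x r t) < eps.
Hypothesis HW2bd : forall x t, dr3 W2 x (Rad x t) t = 0.

Local Notation Vt := (V_tilde Rad Vx).
Local Notation E := (eta_tilde D Rad Vx).

Definition W1 : F3 := fun x r t => dx2 C x t * E x r t.

Definition source : F3 := fun x r t =>
  dt3 W1 x r t + G2 x t - E x r t * dx2 (fun x t => dx2 C x t * avg Rad Vx x t) x t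
  + Vx x r t * dx3 W1 x r t + Vr x r t * dx2 C x t * dr3 E x r t.

Hypothesis Heq : forall x r t, 0 < r <= Rad x t -> Lop D W2 x r t = source x r t.

Lemma C1xt_Rad : C1xt (lift2 Rad).
Proof. apply smooth2_C1xt, HRsm. Qed.

Lemma C1xt_Cx : C1xt (lift2 (dx2 C)).
Proof. apply smooth2_C1xt, HCsm. Qed.

Lemma C1xt_Vx : C1xt Vx.
Proof. apply smooth3_C1xt, HVxsm. Qed.

Lemma Vr_regular : C1xt Vr /\ continuous3 (dr3 Vr) /\
  (forall x r t, derivable_pt_lim (fun y => Vr x y t) r (dr3 Vr x r t)).
Proof. apply smooth3_C1xt, HVrsm. Qed.

Lemma C1xt_avg_Vx : C1xt (lift2 (avg Rad Vx)).
Proof. apply C1xt_avg; auto using C1xt_Rad, C1xt_Vx. Qed.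

Lemma C1xt_Vt : C1xt Vt.
Proof. apply (C1xt_minus Vx (lift2 (avg Rad Vx))); auto using C1xt_Vx, C1xt_avg_Vx. Qed.

Lemma eta_prim_r : eta D Rad Vx = fun x r t => / D * prim_r (radial_flux Vt) x r t.
Proof.
  apply F3_ext. intros x r t. unfold eta, prim_r.
  replace (fun z => / z * Rint (fun s => (Vx x s t - avg Rad Vx x t) * s) 0 z)
    with (fun z => radial_flux Vt x z t).
  - rewrite Rint_RInt; [reflexivity|].
    apply continuous3_ex_RInt_r, continuous3_radial_flux, C1xt_Vt.
  - apply functional_extensionality. intros z. unfold radial_flux, prim_r.
    rewrite Rint_RInt; [reflexivity|].
    apply (continuous3_ex_RInt_r (fun x s t => Vt x s t * s)).
    apply continuous3_mult; [apply C1xt_Vt | apply continuous3_r].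
Qed.

Lemma C1xt_eta : C1xt (eta D Rad Vx).
Proof.
  rewrite eta_prim_r. apply (C1xt_mult (fun _ _ _ => / D)); [apply C1xt_const|].
  apply C1xt_prim_r, C1xt_radial_flux, C1xt_Vt.
Qed.

Lemma C1xt_E : C1xt E.
Proof.
  apply (C1xt_minus (eta D Rad Vx) (lift2 (avg Rad (eta D Rad Vx))));
    auto using C1xt_eta, C1xt_avg, C1xt_Rad.
Qed.

Lemma C1xt_W1 : C1xt W1.
Proof. apply (C1xt_mult (lift2 (dx2 C)) E); auto using C1xt_Cx, C1xt_E. Qed.

Lemma derivable_pt_lim_dr_E x r t :
  derivable_pt_lim (fun y => E x y t) r (/ D * radial_flux Vt x r t).
Proof.
  unfold eta_tilde. rewrite eta_prim_r.
  replace (/ D * radial_flux Vt x r t) with (/ D * radial_flux Vt x r t - 0) by ring.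
  apply derivable_pt_lim_minus; [|apply derivable_pt_lim_const].
  apply derivable_pt_lim_scal with (f := fun y => prim_r (radial_flux Vt) x y t).
  apply derivable_pt_lim_dr3_prim_r, continuous3_radial_flux, C1xt_Vt.
Qed.

Lemma dr3_E : dr3 E = fun x r t => / D * radial_flux Vt x r t.
Proof. apply F3_ext. intros. apply dr3_eq, derivable_pt_lim_dr_E. Qed.

Lemma continuous3_dr3_E : continuous3 (dr3 E).
Proof.
  rewrite dr3_E. apply (continuous3_mult (fun _ _ _ => / D)); [apply continuous3_const|].
  apply continuous3_radial_flux, C1xt_Vt.
Qed.

Lemma ex_RInt_mult_r g x t : continuous3 g -> ex_RInt (fun r => g x r t * r) 0 (Rad x t).
Proof.
  intros Hg. apply (continuous3_ex_RInt_r (fun x r t => g x r t * r)).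
  apply continuous3_mult; [auto | apply continuous3_r].
Qed.

Lemma is_RInt_mult_r g x t v : continuous3 g ->
  RInt (fun r => g x r t * r) 0 (Rad x t) = v -> is_RInt (fun r => g x r t * r) 0 (Rad x t) v.
Proof. intros Hg <-. apply RInt_correct_R, ex_RInt_mult_r, Hg. Qed.

Lemma RInt_E_mult_r x t : RInt (fun r => E x r t * r) 0 (Rad x t) = 0.
Proof. apply (RInt_sub_avg_mult_r Rad (eta D Rad Vx)); [auto | apply C1xt_eta]. Qed.

Lemma RInt_Vt_mult_r x t : RInt (fun r => Vt x r t * r) 0 (Rad x t) = 0.
Proof. apply (RInt_sub_avg_mult_r Rad Vx); [auto | apply C1xt_Vx]. Qed.

Lemma is_RInt_E_mult_r x t : is_RInt (fun r => E x r t * r) 0 (Rad x t) 0.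
Proof.
  apply is_RInt_mult_r; [apply C1xt_E | apply RInt_E_mult_r].
Qed.

Lemma int_radius_W1_mult_r x t : int_radius Rad (fun x r t => W1 x r t * r) x t = 0.
Proof.
  pose proof (is_RInt_scal_R (dx2 C x t) _ _ _ _ (is_RInt_E_mult_r x t)) as H.
  rewrite Rmult_0_r in H. apply is_RInt_unique.
  eapply is_RInt_ext_R; [|exact H]. intros. unfold W1. ring.
Qed.

(* Differentiating [int_0^R W1 r dr = 0] under the integral sign leaves only the boundary
   term. *)
Lemma RInt_dt3_W1_mult_r x t :
  RInt (fun r => dt3 W1 x r t * r) 0 (Rad x t) = - (W1 x (Rad x t) t * Rad x t * dt2 Rad x t).
Proof.
  pose proof (derivable_pt_lim_dt_int_radius Rad C1xt_Rad _ (C1xt_mult_r W1 C1xt_W1) x t) as H.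
  rewrite dt3_mult_r in H by apply C1xt_W1.
  replace (fun y => int_radius Rad (fun x r t => W1 x r t * r) x y) with (fun _ : R => 0) in H
    by (apply functional_extensionality; intros; rewrite int_radius_W1_mult_r; auto).
  pose proof (uniqueness_limite _ _ _ _ (derivable_pt_lim_const 0 t) H) as H0.
  unfold prim_r in H0. lra.
Qed.

Lemma RInt_dx3_W1_mult_r x t :
  RInt (fun r => dx3 W1 x r t * r) 0 (Rad x t) = - (W1 x (Rad x t) t * Rad x t * dx2 Rad x t).
Proof.
  pose proof (derivable_pt_lim_dx_int_radius Rad C1xt_Rad _ (C1xt_mult_r W1 C1xt_W1) x t) as H.
  rewrite dx3_mult_r in H by apply C1xt_W1.
  replace (fun y => int_radius Rad (fun x r t => W1 x r t * r) y t) with (fun _ : R => 0) in H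
    by (apply functional_extensionality; intros; rewrite int_radius_W1_mult_r; auto).
  pose proof (uniqueness_limite _ _ _ _ (derivable_pt_lim_const 0 x) H) as H0.
  unfold prim_r in H0. lra.
Qed.

Lemma dr3_r_mult_Vr x r t : dr3 (fun x r t => r * Vr x r t) x r t = Vr x r t + r * dr3 Vr x r t.
Proof.
  apply dr3_eq.
  replace (Vr x r t + r * dr3 Vr x r t) with (1 * Vr x r t + r * dr3 Vr x r t) by ring.
  apply (derivable_pt_lim_mult id (fun y => Vr x y t));
    [apply derivable_pt_lim_id | apply Vr_regular].
Qed.

(* Integration by parts in [r]; incompressibility turns [d/dr (r V_r)] into [- r dVx/dx]. *)
Lemma RInt_Vr_dr3_E_mult_r x t :
  RInt (fun r => Vr x r t * dr3 E x r t * r) 0 (Rad x t) =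
  Rad x t * Vr x (Rad x t) t * E x (Rad x t) t
  + RInt (fun r => r * dx3 Vx x r t * E x r t) 0 (Rad x t).
Proof.
  destruct Vr_regular as [HVr [HdrVr DrVr]].
  set (F := fun r => r * Vr x r t * E x r t).
  set (dF := fun r => (Vr x r t + r * dr3 Vr x r t) * E x r t + r * Vr x r t * dr3 E x r t).
  assert (HF : is_RInt dF 0 (Rad x t) (minus (F (Rad x t)) (F 0))).
  { apply (is_RInt_derive (V := R_CompleteNormedModule) F dF).
    - intros y _. apply is_derive_Reals. unfold F, dF.
      replace ((Vr x y t + y * dr3 Vr x y t) * E x y t + y * Vr x y t * dr3 E x y t) with
        ((1 * Vr x y t + y * dr3 Vr x y t) * E x y t + y * Vr x y t * dr3 E x y t) by ring.
      apply (derivable_pt_lim_mult (fun y => y * Vr x y t) (fun y => E x y t)).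
      + apply (derivable_pt_lim_mult id (fun y => Vr x y t)); [apply derivable_pt_lim_id | auto].
      + rewrite dr3_E. apply derivable_pt_lim_dr_E.
    - intros y _. unfold dF.
      apply (continuous3_continuous_r (fun x r t => (Vr x r t + r * dr3 Vr x r t) * E x r t
                                                  + r * Vr x r t * dr3 E x r t)).
      apply continuous3_plus; apply continuous3_mult;
        auto using C1xt_cont, C1xt_E, continuous3_dr3_E.
      + apply continuous3_plus; [apply HVr|]. apply continuous3_mult; auto using continuous3_r.
      + apply continuous3_mult; [apply continuous3_r | apply HVr]. }
  assert (HQ : is_RInt (fun r => r * dx3 Vx x r t * E x r t) 0 (Rad x t)
                       (RInt (fun r => r * dx3 Vx x r t * E x r t) 0 (Rad x t))).
  { apply RInt_correct_R, (continuous3_ex_RInt_r (fun x r t => r * dx3 Vx x r t * E x r t)).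
    apply continuous3_mult; [apply continuous3_mult|];
      auto using continuous3_r, C1xt_cont_dx, C1xt_Vx, C1xt_cont, C1xt_E. }
  apply is_RInt_unique.
  replace (Rad x t * Vr x (Rad x t) t * E x (Rad x t) t) with (minus (F (Rad x t)) (F 0))
    by (unfold F, minus, plus, opp; simpl; ring).
  apply (is_RInt_ext (V := R_NormedModule) (fun y => dF y + y * dx3 Vx x y t * E x y t));
    [|apply is_RInt_plus_R; auto].
  intros y Hy. rewrite Rmin_left, Rmax_right in Hy by (left; auto).
  pose proof (Hincomp x y t (conj (Rlt_le _ _ (proj1 Hy)) (Rlt_le _ _ (proj2 Hy)))) as Hi.
  rewrite dr3_r_mult_Vr in Hi. unfold dF.
  replace ((Vr x y t + y * dr3 Vr x y t) * E x y t + y * Vr x y t * dr3 E x y t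
           + y * dx3 Vx x y t * E x y t)
    with ((Vr x y t + y * dr3 Vr x y t + y * dx3 Vx x y t) * E x y t
          + y * Vr x y t * dr3 E x y t) by ring.
  rewrite Hi. match goal with |- ?L = ?M => change (@eq R L M) end. ring.
Qed.

Lemma continuous_source_mult_r x t z : continuous (fun r => source x r t * r) z.
Proof.
  apply (continuous3_continuous_r (fun x' r t' =>
    (dt3 W1 x' r t' + G2 x t - E x' r t' * dx2 (fun x t => dx2 C x t * avg Rad Vx x t) x t
     + Vx x' r t' * dx3 W1 x' r t' + Vr x' r t' * dx2 C x' t' * dr3 E x' r t') * r)).
  destruct Vr_regular as [HVr _].
  apply continuous3_mult; [|apply continuous3_r].
  repeat apply continuous3_plus.
  - apply C1xt_W1.
  - apply continuous3_const.
  - apply continuous3_opp, (continuous3_mult _ (fun _ _ _ => _));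
      [apply C1xt_E | apply continuous3_const].
  - apply continuous3_mult; [apply C1xt_Vx | apply C1xt_W1].
  - repeat apply continuous3_mult; auto using C1xt_cont, C1xt_Cx, continuous3_dr3_E.
Qed.

(* [r * source] is [D (r W2_r)_r], so its integral over [e, R] is the flux difference. *)
Lemma RInt_source_mult_r_flux x t e : 0 < e < Rad x t ->
  RInt (fun r => source x r t * r) e (Rad x t) = - D * (e * dr3 W2 x e t).
Proof.
  intros He.
  destruct HW2sm as [S [SW HS]].
  destruct (HS W2 SW) as [_ [SrW _]].
  destruct (HS _ SrW) as [_ [SrrW [_ HdrW]]].
  destruct (HS _ SrrW) as [_ [_ [_ HdrrW]]].
  set (U := fun y => y * dr3 W2 x y t).
  set (dU := fun y => 1 * dr3 W2 x y t + y * dr3 (dr3 W2) x y t).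
  assert (HU : is_RInt dU e (Rad x t) (minus (U (Rad x t)) (U e))).
  { apply (is_RInt_derive (V := R_CompleteNormedModule) U dU); intros y Hy;
      rewrite Rmin_left, Rmax_right in Hy by lra.
    - apply is_derive_Reals. unfold U, dU.
      apply (derivable_pt_lim_mult id (fun z => dr3 W2 x z t)); [apply derivable_pt_lim_id|].
      destruct (HdrW x y t ltac:(simpl; lra)) as [_ [_ [[l Hl] _]]].
      rewrite (dr3_eq (dr3 W2) x y t l Hl). exact Hl.
    - apply (cont3_at_continuous_r (fun x r t => 1 * dr3 W2 x r t + r * dr3 (dr3 W2) x r t)).
      apply cont3_at_plus; apply cont3_at_mult;
        [apply continuous3_const | apply HdrW | apply continuous3_r | apply HdrrW]; simpl; lra. }
  apply is_RInt_unique.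
  replace (- D * (e * dr3 W2 x e t)) with (D * minus (U (Rad x t)) (U e))
    by (unfold U, minus, plus, opp; simpl; rewrite HW2bd; ring).
  apply (is_RInt_ext (V := R_NormedModule) (fun y => D * dU y)); [|apply is_RInt_scal_R; auto].
  intros y Hy. rewrite Rmin_left, Rmax_right in Hy by lra.
  rewrite <- Heq by lra. unfold Lop, dU. simpl. field. lra.
Qed.

Lemma RInt_source_mult_r x t : RInt (fun r => source x r t * r) 0 (Rad x t) = 0.
Proof.
  apply (RInt_0_of_flux_vanishing _ (fun r => dr3 W2 x r t) (Rad x t) D);
    auto using continuous_source_mult_r, RInt_source_mult_r_flux.
Qed.

Definition flux_density : F3 := fun x r t => Vt x r t * W1 x r t * r.

Lemma C1xt_flux_density : C1xt flux_density.
Proof. apply C1xt_mult_r, C1xt_mult; auto using C1xt_Vt, C1xt_W1. Qed.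

Lemma dx3_flux_density x r t : dx3 flux_density x r t =
  (dx3 Vx x r t - dx2 (avg Rad Vx) x t) * W1 x r t * r + Vt x r t * dx3 W1 x r t * r.
Proof.
  unfold flux_density.
  rewrite (dx3_mult_r (fun x r t => Vt x r t * W1 x r t)), (dx3_mult Vt W1);
    auto using C1xt_Vt, C1xt_W1, C1xt_mult.
  replace (dx3 Vt x r t) with (dx3 Vx x r t - dx2 (avg Rad Vx) x t); [ring|].
  symmetry. apply dx3_eq, (derivable_pt_lim_minus (fun y => Vx y r t) (fun y => avg Rad Vx y t)).
  - apply C1xt_Vx.
  - exact (C1xt_dx _ C1xt_avg_Vx x r t).
Qed.

Lemma dx2_int_radius_flux_density x t : dx2 (int_radius Rad flux_density) x t =
  prim_r (dx3 flux_density) x (Rad x t) t + flux_density x (Rad x t) t * dx2 Rad x t.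
Proof.
  apply pderiv_eq, derivable_pt_lim_dx_int_radius; auto using C1xt_Rad, C1xt_flux_density.
Qed.

(* Since [int_0^R Vt r dr = 0], the mean [<eta>] drops out of [<R^2 eta Vt>]. *)
Lemma avg_eta_Vt_int_radius x t :
  dx2 C x t * avg Rad (fun x r t => Rad x t ^ 2 * eta D Rad Vx x r t * V_tilde Rad Vx x r t) x t
  = 2 * int_radius Rad flux_density x t.
Proof.
  assert (HetaVt : continuous3 (fun x r t => eta D Rad Vx x r t * Vt x r t))
    by (apply continuous3_mult; auto using C1xt_cont, C1xt_eta, C1xt_Vt).
  set (I := RInt (fun r => eta D Rad Vx x r t * Vt x r t * r) 0 (Rad x t)).
  rewrite avg_int_radius; unfold int_radius.
  2:{ apply continuous3_mult; [|apply C1xt_Vt].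
      apply (continuous3_mult (fun x _ t => Rad x t ^ 2)); [|apply C1xt_eta].
      replace (fun x (_ : R) t => Rad x t ^ 2) with (fun x r t => lift2 Rad x r t * lift2 Rad x r t)
        by (apply F3_ext; intros; unfold lift2; ring).
      apply continuous3_mult; apply C1xt_Rad. }
  assert (H1 : RInt (fun r => Rad x t ^ 2 * eta D Rad Vx x r t * Vt x r t * r) 0 (Rad x t)
               = Rad x t ^ 2 * I).
  { apply is_RInt_unique. eapply is_RInt_ext_R;
      [|apply is_RInt_scal_R, RInt_correct_R, (ex_RInt_mult_r (fun x r t => _ x r t * _ x r t)), HetaVt].
    intros. simpl. ring. }
  assert (H2 : RInt (fun r => flux_density x r t) 0 (Rad x t) = dx2 C x t * I).
  { pose proof (is_RInt_plus_R _ _ _ _ _ _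
      (is_RInt_scal_R (dx2 C x t) _ _ _ _ (RInt_correct_R _ _ _ (ex_RInt_mult_r _ x t HetaVt)))
      (is_RInt_scal_R (- (dx2 C x t * avg Rad (eta D Rad Vx) x t)) _ _ _ _
         (RInt_correct_R _ _ _ (ex_RInt_mult_r _ x t (C1xt_cont _ C1xt_Vt))))) as H.
    rewrite RInt_Vt_mult_r, Rmult_0_r, Rplus_0_r in H.
    apply is_RInt_unique. eapply is_RInt_ext_R; [|exact H].
    intros. unfold flux_density, W1, eta_tilde. simpl. ring. }
  rewrite H1, H2. specialize (HRpos x t). field. lra.
Qed.

Lemma RInt_Vt_dx3_W1_mult_r x t :
  RInt (fun r => Vt x r t * dx3 W1 x r t * r) 0 (Rad x t) =
  dx2 (int_radius Rad flux_density) x t - flux_density x (Rad x t) t * dx2 Rad x t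
  - dx2 C x t * RInt (fun r => r * dx3 Vx x r t * E x r t) 0 (Rad x t).
Proof.
  set (Q := RInt (fun r => r * dx3 Vx x r t * E x r t) 0 (Rad x t)).
  assert (Hflux : is_RInt (fun r => dx3 flux_density x r t) 0 (Rad x t)
    (dx2 (int_radius Rad flux_density) x t - flux_density x (Rad x t) t * dx2 Rad x t)).
  { rewrite dx2_int_radius_flux_density. unfold prim_r.
    unfold Rminus. rewrite Rplus_assoc, Rplus_opp_r, Rplus_0_r.
    apply RInt_correct_R, continuous3_ex_RInt_r, C1xt_flux_density. }
  assert (HQ : is_RInt (fun r => r * dx3 Vx x r t * E x r t) 0 (Rad x t) Q).
  { apply RInt_correct_R, (continuous3_ex_RInt_r (fun x r t => r * dx3 Vx x r t * E x r t)).
    apply continuous3_mult; [apply continuous3_mult|];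
      auto using continuous3_r, C1xt_cont_dx, C1xt_Vx, C1xt_cont, C1xt_E. }
  pose proof (is_RInt_plus_R _ _ _ _ _ _ Hflux (is_RInt_plus_R _ _ _ _ _ _
    (is_RInt_scal_R (- dx2 C x t) _ _ _ _ HQ)
    (is_RInt_scal_R (dx2 C x t * dx2 (avg Rad Vx) x t) _ _ _ _ (is_RInt_E_mult_r x t)))) as H.
  apply is_RInt_unique. eapply is_RInt_ext_R; [|replace (_ - _ - _) with
    (dx2 (int_radius Rad flux_density) x t - flux_density x (Rad x t) t * dx2 Rad x t
     + (- dx2 C x t * Q + dx2 C x t * dx2 (avg Rad Vx) x t * 0)) by ring; exact H].
  intros r. cbv beta. rewrite dx3_flux_density. unfold W1. ring.
Qed.

Lemma RInt_source_mult_r_value x t :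
  RInt (fun r => source x r t * r) 0 (Rad x t) =
  G2 x t * (Rad x t ^ 2 / 2) + dx2 (int_radius Rad flux_density) x t
  + W1 x (Rad x t) t * Rad x t
    * (Vr x (Rad x t) t - dt2 Rad x t - Vx x (Rad x t) t * dx2 Rad x t).
Proof.
  destruct Vr_regular as [HVr _].
  set (B := dx2 (fun x t => dx2 C x t * avg Rad Vx x t) x t).
  assert (Hr : is_RInt (fun r => r) 0 (Rad x t) (Rad x t ^ 2 / 2)).
  { rewrite <- RInt_id_0. apply RInt_correct_R, ex_RInt_continuous_R. intros; apply continuous_id. }
  pose proof (is_RInt_plus_R _ _ _ _ _ _
    (is_RInt_mult_r _ x t _ (C1xt_cont_dt _ C1xt_W1) (RInt_dt3_W1_mult_r x t)) (is_RInt_plus_R _ _ _ _ _ _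
    (is_RInt_scal_R (G2 x t) _ _ _ _ Hr) (is_RInt_plus_R _ _ _ _ _ _
    (is_RInt_scal_R (- B) _ _ _ _ (is_RInt_E_mult_r x t)) (is_RInt_plus_R _ _ _ _ _ _
    (is_RInt_scal_R (avg Rad Vx x t) _ _ _ _
       (is_RInt_mult_r _ x t _ (C1xt_cont_dx _ C1xt_W1) (RInt_dx3_W1_mult_r x t))) (is_RInt_plus_R _ _ _ _ _ _
    (is_RInt_mult_r (fun x r t => Vt x r t * dx3 W1 x r t) x t _
       ltac:(apply continuous3_mult; auto using C1xt_cont, C1xt_Vt, C1xt_cont_dx, C1xt_W1)
       (RInt_Vt_dx3_W1_mult_r x t))
    (is_RInt_scal_R (dx2 C x t) _ _ _ _
       (is_RInt_mult_r (fun x r t => Vr x r t * dr3 E x r t) x t _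
          ltac:(apply continuous3_mult; auto using C1xt_cont, continuous3_dr3_E)
          (RInt_Vr_dr3_E_mult_r x t)))))))) as H.
  apply is_RInt_unique. eapply is_RInt_ext_R;
    [|replace (_ + _ + _) with (- (W1 x (Rad x t) t * Rad x t * dt2 Rad x t)
      + (G2 x t * (Rad x t ^ 2 / 2) + (- B * 0
      + (avg Rad Vx x t * - (W1 x (Rad x t) t * Rad x t * dx2 Rad x t)
      + (dx2 (int_radius Rad flux_density) x t - flux_density x (Rad x t) t * dx2 Rad x t
         - dx2 C x t * RInt (fun r => r * dx3 Vx x r t * E x r t) 0 (Rad x t)
      + dx2 C x t * (Rad x t * Vr x (Rad x t) t * E x (Rad x t) t
         + RInt (fun r => r * dx3 Vx x r t * E x r t) 0 (Rad x t)))))));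
      [exact H | unfold flux_density, W1, V_tilde; ring]].
  intros r. unfold source, V_tilde. fold B. ring.
Qed.

Lemma G2_balance x t : G2 x t * (Rad x t ^ 2 / 2) + dx2 (int_radius Rad flux_density) x t = 0.
Proof.
  pose proof (RInt_source_mult_r_value x t) as H.
  rewrite RInt_source_mult_r, <- Hstream in H. lra.
Qed.

Lemma G2_formula x t :
  G2 x t = - (/ (Rad x t) ^ 2) * dx2 (fun x t =>
    dx2 C x t * avg Rad (fun x r t => (Rad x t) ^ 2 * eta D Rad Vx x r t
                                       * V_tilde Rad Vx x r t) x t) x t.
Proof.
  rewrite (dx2_ext _ (fun x t => 2 * int_radius Rad flux_density x t))
    by apply avg_eta_Vt_int_radius.
  replace (dx2 _ x t) with (2 * dx2 (int_radius Rad flux_density) x t).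
  - pose proof (G2_balance x t). specialize (HRpos x t). field_simplify_eq; lra.
  - symmetry. apply pderiv_eq, derivable_pt_lim_scal.
    rewrite dx2_int_radius_flux_density.
    apply derivable_pt_lim_dx_int_radius; auto using C1xt_Rad, C1xt_flux_density.
Qed.

End Dispersion.

Theorem mainTheorem2
  (Rad : F2) (Vx Vr : F3) (D : R) (C : F2) (G2 : F2) (W2 : F3)
  (HRpos : forall x t, 0 < Rad x t)
  (HRsm : smooth2 Rad)
  (HVxsm : smooth3 Vx)
  (HVrsm : smooth3 Vr)
  (Hincomp : forall x r t, 0 <= r <= Rad x t ->
      dr3 (fun x r t => r * Vr x r t) x r t + r * dx3 Vx x r t = 0)
  (Hstream : forall x t,
      dt2 Rad x t + Vx x (Rad x t) t * dx2 Rad x t = Vr x (Rad x t) t)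
  (HD : 0 < D)
  (HCsm : smooth2 C)
  (HW2sm : smooth3_on (fun _ r _ => 0 < r) W2)
  (HW2lim : forall x t eps, 0 < eps -> exists delta, 0 < delta /\
      forall r, 0 < r < delta -> Rabs (r * dr3 W2 x r t) < eps)
  (HW2bd : forall x t, dr3 W2 x (Rad x t) t = 0)
  (Heq : forall x r t, 0 < r <= Rad x t ->
      Lop D W2 x r t =
        dt3 (fun x r t => dx2 C x t * eta_tilde D Rad Vx x r t) x r t
        + G2 x t
        - eta_tilde D Rad Vx x r t
            * dx2 (fun x t => dx2 C x t * avg Rad Vx x t) x t
        + Vx x r t
            * dx3 (fun x r t => dx2 C x t * eta_tilde D Rad Vx x r t) x r t
        + Vr x r t * dx2 C x t * dr3 (eta_tilde D Rad Vx) x r t) :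
  forall x t,
    G2 x t =
      - (/ (Rad x t) ^ 2)
        * dx2 (fun x t =>
                 dx2 C x t
                 * avg Rad (fun x r t =>
                              (Rad x t) ^ 2 * eta D Rad Vx x r t
                              * V_tilde Rad Vx x r t) x t) x t.
Proof.
  intros x t. eapply G2_formula; eauto.
Qed.
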